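(* Let $r_{\rm A}>0$ and $\theta_{\rm A}\in\,]0,\pi/2[$. The function $$T_D^S(\eta)=\int_{\theta_{\rm A}}^{\pi-\theta_{\rm A}}\frac{r_{\rm A}^{3/2}(1-\eta\sin\theta_{\rm A})^{3/2}}{(1-\eta\sin\theta)^2}\,{\rm d}\theta,\qquad\eta\in\,]-\infty,1[,$$ is strictly convex, with ${\rm d}^2T_D^S/{\rm d}\eta^2>0$ everywhere.
   Context: $T_D^S(\eta)$ is the elapsed time, for the Kepler problem $\ddot q=-q/|q|^3$ with center ${\rm O}$ at the origin, of the direct Keplerian arc from ${\rm A}=(r_{\rm A}\cos\theta_{\rm A},r_{\rm A}\sin\theta_{\rm A})$ to ${\rm B}=(-r_{\rm A}\cos\theta_{\rm A},r_{\rm A}\sin\theta_{\rm A})$ on the conic with polar equation $r=r_{\rm A}(1-\eta\sin\theta_{\rm A})/(1-\eta\sin\theta)$; $\eta$ is the signed eccentricity. *)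

From Stdlib Require Import Reals Lra ClassicalEpsilon.
Open Scope R_scope.

(* Total Riemann integral: the Riemann integral of f on [a,b] when f is
   Riemann integrable there (RiemannInt does not depend on the proof,
   cf. RiemannInt_P5), and 0 otherwise. *)
Definition RInt (f : R -> R) (a b : R) : R :=
  match excluded_middle_informative (inhabited (Riemann_integrable f a b)) with
  | left H => RiemannInt (epsilon H (fun _ => True))
  | right _ => 0
  end.

Definition TDS (rA thA eta : R) : R :=
  RInt (fun th => Rpower rA (3/2) * Rpower (1 - eta * sin thA) (3/2)
                  / (1 - eta * sin th) ^ 2) thA (PI - thA).

From Pilot Require Import Defs.
From Stdlib Require Import Reals Lra Lia ClassicalEpsilon.
From Coquelicot Require Import Coquelicot.
Open Scope R_scope.

(* With s = sin thA, rho(e) = sqrt (1 - e s) and the moments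
   M_n(e) = int_{thA}^{pi - thA} sin^n v / (1 - e sin v)^(n+2) dv, one has
   TDS = rA^(3/2) rho^3 M_0, and differentiation under the integral sign gives
   M_n' = (n + 2) M_(n+1).  Hence TDS'' = rA^(3/2) times the integral of
   3/4 s^2/rho k_0 - 6 s rho k_1 + 6 rho^3 k_2 (k_n the integrand of M_n), which
   after multiplication by rho (1 - e sin v)^4 is the quadratic form
   3/4 A^2 - 6 A B + 6 B^2 in A = s (1 - e sin v) <= B = rho^2 sin v, hence positive. *)

Lemma deriv_strict_incr_of_deriv2_pos (f' f'' : R -> R) (c : R) :
  (forall x, x < c -> derivable_pt_lim f' x (f'' x) /\ 0 < f'' x) ->
  forall x y, x < y -> y < c -> f' x < f' y.
Proof.
intros Hf x y Hxy Hy.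
destruct (MVT_cor2 f' f'' x y Hxy) as [z [Ez Hz]].
- intros z Hz; apply Hf; lra.
- assert (0 < f'' z) by (apply Hf; lra). nra.
Qed.

Lemma strictly_convex_of_deriv2_pos (f f' f'' : R -> R) (c : R) :
  (forall x, x < c ->
     derivable_pt_lim f x (f' x) /\ derivable_pt_lim f' x (f'' x) /\ 0 < f'' x) ->
  forall x y t, x < c -> y < c -> x <> y -> 0 < t < 1 ->
  f (t * x + (1 - t) * y) < t * f x + (1 - t) * f y.
Proof.
intros Hf.
pose proof (deriv_strict_incr_of_deriv2_pos f' f'' c
  (fun x Hx => proj2 (Hf x Hx))) as Hincr.
assert (Hlt : forall x y t, x < y -> y < c -> 0 < t < 1 ->
          f (t * x + (1 - t) * y) < t * f x + (1 - t) * f y).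
{ intros x y t Hxy Hy Ht. set (z := t * x + (1 - t) * y).
  assert (Hxz : x < z) by (unfold z; nra).
  assert (Hzy : z < y) by (unfold z; nra).
  destruct (MVT_cor2 f f' x z Hxz) as [c1 [E1 Hc1]].
  { intros w Hw; apply Hf; lra. }
  destruct (MVT_cor2 f f' z y Hzy) as [c2 [E2 Hc2]].
  { intros w Hw; apply Hf; lra. }
  assert (Hc12 : f' c1 < f' c2) by (apply Hincr; lra).
  (* The chord inequality is t (1 - t) (y - x) (f' c1 - f' c2) < 0. *)
  replace (z - x) with ((1 - t) * (y - x)) in E1 by (unfold z; ring).
  replace (y - z) with (t * (y - x)) in E2 by (unfold z; ring).
  assert (0 < t * (1 - t) * (y - x)) by (apply Rmult_lt_0_compat; nra).
  nra. }
intros x y t Hx Hy Hxy Ht. destruct (Rlt_or_le x y) as [Hlt_xy|Hle_yx].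
- now apply Hlt.
- replace (t * x + (1 - t) * y) with ((1 - t) * y + (1 - (1 - t)) * x) by ring.
  replace (t * f x + (1 - t) * f y) with ((1 - t) * f y + (1 - (1 - t)) * f x) by ring.
  apply Hlt; lra.
Qed.

Lemma one_sub_mul_sin_pos u v : u < 1 -> 0 <= sin v -> 0 < 1 - u * sin v.
Proof. intros Hu Hv. pose proof (SIN_bound v). destruct (Rle_or_lt 0 u); nra. Qed.

Lemma sin_ge_on_reflected_interval x t :
  0 <= x <= PI / 2 -> x <= t <= PI - x -> sin x <= sin t.
Proof.
intros Hx Ht. destruct (Rle_or_lt t (PI / 2)).
- apply sin_incr_1; lra.
- rewrite <- (sin_PI_x t). apply sin_incr_1; lra.
Qed.

Lemma Rpower_3_2 x : 0 < x -> Rpower x (3 / 2) = sqrt x ^ 3.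
Proof.
intros Hx.
replace (3 / 2) with (1 + / 2) by field.
rewrite Rpower_plus, Rpower_1, Rpower_sqrt by lra.
rewrite <- (sqrt_sqrt x) at 1 by lra. ring.
Qed.

Definition kernel (n : nat) (u v : R) : R := sin v ^ n / (1 - u * sin v) ^ (n + 2).

Lemma is_derive_kernel n u v : 1 - u * sin v <> 0 ->
  is_derive (fun u => kernel n u v) u (INR (n + 2) * kernel (S n) u v).
Proof.
intros Hq. unfold kernel.
assert ((1 - u * sin v) ^ n <> 0) by (apply pow_nonzero; auto).
auto_derive.
- apply pow_nonzero; lra.
- replace (S n + 2)%nat with (S (S (S n))) by lia.
  replace (n + 2)%nat with (S (S n)) by lia.
  simpl pred. replace (1 + - (u * sin v)) with (1 - u * sin v) by ring.
  simpl. field. auto.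
Qed.

Lemma continuous_kernel n u v : 1 - u * sin v <> 0 -> continuous (kernel n u) v.
Proof.
intros Hq. apply (@ex_derive_continuous R_AbsRing R_NormedModule).
unfold kernel. auto_derive. apply pow_nonzero; auto.
Qed.

Lemma continuity_2d_pt_denominator u v :
  continuity_2d_pt (fun u v => 1 - u * sin v) u v.
Proof.
apply continuity_2d_pt_minus; [apply continuity_2d_pt_const|].
apply continuity_2d_pt_mult; [apply continuity_2d_pt_id1|].
apply (continuity_1d_2d_pt_comp sin (fun _ v => v));
  auto using continuity_sin, continuity_2d_pt_id2.
Qed.

Lemma continuity_2d_pt_kernel n u v :
  1 - u * sin v <> 0 -> continuity_2d_pt (kernel n) u v.
Proof.
intros Hq. pose proof (derivable_continuous _ (derivable_pow n)) as Hpow.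
pose proof (derivable_continuous _ (derivable_pow (n + 2))) as Hpow2.
unfold kernel, Rdiv. apply continuity_2d_pt_mult.
- apply (continuity_1d_2d_pt_comp (fun z => z ^ n) (fun _ v => sin v)); auto.
  apply (continuity_1d_2d_pt_comp sin (fun _ v => v));
    auto using continuity_sin, continuity_2d_pt_id2.
- apply continuity_2d_pt_inv; [|apply pow_nonzero; auto].
  apply (continuity_1d_2d_pt_comp (fun z => z ^ (n + 2)) (fun u v => 1 - u * sin v));
    auto using continuity_2d_pt_denominator.
Qed.

Definition moment (a b : R) (n : nat) (u : R) : R := RInt (fun v => kernel n u v) a b.

Section Moments.

Variables a b : R.
Hypotheses (Ha : 0 <= a) (Hab : a <= b) (Hb : b <= PI).

Lemma kernel_denominator_pos u v :
  u < 1 -> Rmin a b <= v <= Rmax a b -> 0 < 1 - u * sin v.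
Proof.
intros Hu Hv. rewrite Rmin_left, Rmax_right in Hv by lra.
apply one_sub_mul_sin_pos; auto. apply sin_ge_0; lra.
Qed.

Lemma ex_RInt_kernel n u : u < 1 -> ex_RInt (fun v => kernel n u v) a b.
Proof.
intros Hu. apply (@ex_RInt_continuous R_CompleteNormedModule). intros v Hv.
apply continuous_kernel. pose proof (kernel_denominator_pos u v Hu Hv). lra.
Qed.

Lemma is_derive_moment n u : u < 1 ->
  is_derive (moment a b n) u (INR (n + 2) * moment a b (S n) u).
Proof.
intros Hu. unfold moment.
replace (INR (n + 2) * RInt (fun v => kernel (S n) u v) a b)
  with (RInt (fun v => Derive (fun u => kernel n u v) u) a b).
2:{ rewrite <- (RInt_scal (V := R_CompleteNormedModule)) by (apply ex_RInt_kernel; auto).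
    apply RInt_ext. intros v Hv. apply is_derive_unique, is_derive_kernel.
    assert (0 < 1 - u * sin v) by (apply kernel_denominator_pos; lra). lra. }
apply (is_derive_RInt_param (kernel n) a b u).
- apply (locally_interval _ u m_infty 1); simpl; auto.
  intros w _ Hw v Hv. eexists. apply is_derive_kernel.
  pose proof (kernel_denominator_pos w v Hw Hv). lra.
- intros v Hv. pose proof (kernel_denominator_pos u v Hu Hv).
  apply (continuity_2d_pt_ext_loc (fun u v => INR (n + 2) * kernel (S n) u v)).
  + apply (locally_2d_impl (fun u v => 1 - u * sin v <> 0)).
    * apply locally_2d_forall. intros w z Hq. symmetry.
      apply is_derive_unique, is_derive_kernel; auto.
    * apply continuity_2d_pt_neq_0; [apply continuity_2d_pt_denominator|lra].
  + apply continuity_2d_pt_mult; [apply continuity_2d_pt_const|].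
    apply continuity_2d_pt_kernel. lra.
- apply (locally_interval _ u m_infty 1); simpl; auto.
  intros w _ Hw. apply ex_RInt_kernel; auto.
Qed.

End Moments.

Lemma Defs_RInt_eq (f : R -> R) a b : ex_RInt f a b -> Defs.RInt f a b = RInt f a b.
Proof.
intros Hf. unfold Defs.RInt.
destruct (excluded_middle_informative _) as [H|H].
- now rewrite (RInt_Reals f a b (epsilon H (fun _ => True))).
- exfalso. apply H. constructor. now apply ex_RInt_Reals_0.
Qed.

Lemma d2TDS_integrand_pos s e v : 0 < s <= sin v -> e < 1 ->
  0 < 3 / 4 * s ^ 2 / sqrt (1 - e * s) * kernel 0 e v
      - 6 * s * sqrt (1 - e * s) * kernel 1 e v
      + 6 * sqrt (1 - e * s) ^ 3 * kernel 2 e v.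
Proof.
intros Hs He. pose proof (SIN_bound v).
assert (Hw : 0 < 1 - e * s) by (destruct (Rle_or_lt 0 e); nra).
set (r := sqrt (1 - e * s)). set (q := 1 - e * sin v).
assert (Hq : 0 < q) by (apply one_sub_mul_sin_pos; lra).
assert (Hr : 0 < r) by (apply sqrt_lt_R0; lra).
assert (Hrr : r * r = 1 - e * s) by (apply sqrt_sqrt; lra).
(* With A = s q and B = r^2 sin v one has B - A = sin v - s >= 0, and the numerator
   3/4 A^2 - 6 A B + 6 B^2 = 3/4 A^2 + 6 B (B - A) is positive. *)
set (A := s * q). set (B := r * r * sin v).
assert (HAB : B - A = sin v - s) by (unfold A, B, q; rewrite Hrr; ring).
assert (HA : 0 < A) by (apply Rmult_lt_0_compat; lra).
assert (0 <= B * (B - A)) by (apply Rmult_le_pos; lra).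
assert (Hnum : 0 < 3 / 4 * A ^ 2 - 6 * A * B + 6 * B ^ 2) by nra.
replace (3 / 4 * s ^ 2 / r * kernel 0 e v - 6 * s * r * kernel 1 e v
         + 6 * r ^ 3 * kernel 2 e v)
  with ((3 / 4 * A ^ 2 - 6 * A * B + 6 * B ^ 2) / (r * q ^ 4)).
- apply Rdiv_lt_0_compat; auto. apply Rmult_lt_0_compat; auto. apply pow_lt; auto.
- unfold kernel, A, B. fold q. simpl. field. split; lra.
Qed.

Section TDS.

Variables rA thA : R.
Hypotheses (Hth0 : 0 < thA) (Hth1 : thA < PI / 2).

Local Notation M := (moment thA (PI - thA)).

Definition rho (e : R) : R := sqrt (1 - e * sin thA).

Definition dTDS (e : R) : R :=
  Rpower rA (3 / 2) * (- (3 / 2) * sin thA * rho e * M 0 e + 2 * rho e ^ 3 * M 1 e).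

Definition d2TDS (e : R) : R :=
  Rpower rA (3 / 2) * (3 / 4 * sin thA ^ 2 / rho e * M 0 e
    - 6 * sin thA * rho e * M 1 e + 6 * rho e ^ 3 * M 2 e).

Lemma one_sub_mul_sin_thA_pos e : e < 1 -> 0 < 1 - e * sin thA.
Proof. intros He. apply one_sub_mul_sin_pos; auto. apply sin_ge_0; lra. Qed.

Lemma is_derive_M n e : e < 1 -> is_derive (M n) e (INR (n + 2) * M (S n) e).
Proof. apply is_derive_moment; lra. Qed.

Lemma TDS_eq_moment e : e < 1 -> TDS rA thA e = Rpower rA (3 / 2) * rho e ^ 3 * M 0 e.
Proof.
intros He. pose proof (one_sub_mul_sin_thA_pos e He).
assert (Hpt : forall v, Rmin thA (PI - thA) < v < Rmax thA (PI - thA) ->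
  Rpower rA (3 / 2) * rho e ^ 3 * kernel 0 e v =
  Rpower rA (3 / 2) * Rpower (1 - e * sin thA) (3 / 2) / (1 - e * sin v) ^ 2).
{ intros v Hv. assert (0 < 1 - e * sin v)
    by (apply (kernel_denominator_pos thA (PI - thA)); lra).
  unfold rho, kernel. rewrite (Rpower_3_2 (1 - e * sin thA)) by lra. simpl. field. lra. }
assert (Hex : ex_RInt (fun v => kernel 0 e v) thA (PI - thA))
  by (apply ex_RInt_kernel; lra).
unfold TDS. rewrite Defs_RInt_eq.
- unfold moment. rewrite <- (RInt_scal (V := R_CompleteNormedModule)) by auto.
  symmetry. now apply RInt_ext.
- eapply ex_RInt_ext; [exact Hpt|]. now apply (ex_RInt_scal (V := R_CompleteNormedModule)).
Qed.

Lemma is_derive_TDS e : e < 1 -> is_derive (TDS rA thA) e (dTDS e).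
Proof.
intros He.
apply (is_derive_ext_loc (fun e => Rpower rA (3 / 2) * rho e ^ 3 * M 0 e)).
{ apply (locally_interval _ e m_infty 1); simpl; auto.
  intros w _ Hw. symmetry. now apply TDS_eq_moment. }
pose proof (one_sub_mul_sin_thA_pos e He).
pose proof (is_derive_M 0 e He) as HM.
unfold dTDS, rho. auto_derive.
- repeat split; [lra | exact (ex_intro _ _ HM)].
- replace (Derive (fun x => M 0 x) e) with (INR (0 + 2) * M 1 e)
    by (symmetry; now apply is_derive_unique).
  replace (1 + - (e * sin thA)) with (1 - e * sin thA) by ring.
  simpl. field. apply Rgt_not_eq, sqrt_lt_R0. lra.
Qed.

Lemma is_derive_dTDS e : e < 1 -> is_derive dTDS e (d2TDS e).
Proof.
intros He. pose proof (one_sub_mul_sin_thA_pos e He).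
pose proof (is_derive_M 0 e He) as HM0. pose proof (is_derive_M 1 e He) as HM1.
unfold dTDS, d2TDS, rho. auto_derive.
- repeat split; [lra | exact (ex_intro _ _ HM0) | lra | exact (ex_intro _ _ HM1)].
- replace (Derive (fun x => M 0 x) e) with (INR (0 + 2) * M 1 e)
    by (symmetry; now apply is_derive_unique).
  replace (Derive (fun x => M 1 x) e) with (INR (1 + 2) * M 2 e)
    by (symmetry; now apply is_derive_unique).
  replace (1 + - (e * sin thA)) with (1 - e * sin thA) by ring.
  simpl. field. apply Rgt_not_eq, sqrt_lt_R0. lra.
Qed.

Lemma d2TDS_pos e : e < 1 -> 0 < d2TDS e.
Proof.
intros He. unfold d2TDS, moment.
apply Rmult_lt_0_compat; [apply exp_pos|].
assert (Hex : forall n, ex_RInt (fun v => kernel n e v) thA (PI - thA))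
  by (intros; apply ex_RInt_kernel; lra).
set (c0 := 3 / 4 * sin thA ^ 2 / rho e). set (c1 := 6 * sin thA * rho e).
set (c2 := 6 * rho e ^ 3).
assert (Hint : is_RInt (fun v => c0 * kernel 0 e v - c1 * kernel 1 e v + c2 * kernel 2 e v)
  thA (PI - thA) (c0 * RInt (fun v => kernel 0 e v) thA (PI - thA)
    - c1 * RInt (fun v => kernel 1 e v) thA (PI - thA)
    + c2 * RInt (fun v => kernel 2 e v) thA (PI - thA))).
{ apply (is_RInt_plus (V := R_NormedModule));
    [apply (is_RInt_minus (V := R_NormedModule))|];
    apply (is_RInt_scal (V := R_NormedModule));
    apply (RInt_correct (V := R_CompleteNormedModule)), Hex. }
rewrite <- (is_RInt_unique _ _ _ _ Hint).
apply RInt_gt_0; [lra| |].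
- intros v Hv. apply d2TDS_integrand_pos; auto. split.
  + apply sin_gt_0; lra.
  + apply sin_ge_on_reflected_interval; lra.
- intros v Hv.
  assert (0 < 1 - e * sin v).
  { apply (kernel_denominator_pos thA (PI - thA)); try lra.
    rewrite Rmin_left, Rmax_right; lra. }
  apply (continuous_plus (V := R_NormedModule));
    [apply (continuous_minus (V := R_NormedModule))|];
    apply (continuous_scal_r (V := R_NormedModule)), continuous_kernel; lra.
Qed.

End TDS.

Theorem proposition5 (rA thA : R) (hr : 0 < rA) (h1 : 0 < thA) (h2 : thA < PI / 2) :
  (forall x y t : R, x < 1 -> y < 1 -> x <> y -> 0 < t < 1 ->
     TDS rA thA (t * x + (1 - t) * y) < t * TDS rA thA x + (1 - t) * TDS rA thA y)
  /\
  (exists T1 T2 : R -> R, forall eta : R, eta < 1 ->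
     derivable_pt_lim (TDS rA thA) eta (T1 eta) /\
     derivable_pt_lim T1 eta (T2 eta) /\
     0 < T2 eta).
Proof.
assert (Hderiv : forall eta, eta < 1 ->
  derivable_pt_lim (TDS rA thA) eta (dTDS rA thA eta) /\
  derivable_pt_lim (dTDS rA thA) eta (d2TDS rA thA eta) /\ 0 < d2TDS rA thA eta).
{ intros eta He. rewrite <- !is_derive_Reals.
  split; [|split]; [apply is_derive_TDS | apply is_derive_dTDS | apply d2TDS_pos]; auto. }
split.
- exact (strictly_convex_of_deriv2_pos _ _ _ 1 Hderiv).
- exists (dTDS rA thA), (d2TDS rA thA). exact Hderiv.
Qed.
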